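(* Let $R$ be a ring whose only idempotents are $0$ and $1$. Then $R$ is a GSWNC ring if and only if $R$ is a local ring whose Jacobson radical $J(R)$ is nil.
   Context: All rings are associative with identity. An element $a$ of a ring is strongly weakly nil-clean if there exist an idempotent $e$ and a nilpotent $q$ with $eq = qe$ such that $a = q + e$ or $a = q - e$. A ring is GSWNC if every non-invertible element is strongly weakly nil-clean. *)

From HB Require Import structures.
From mathcomp Require Import all_boot all_algebra.
Set Implicit Arguments. Unset Strict Implicit. Unset Printing Implicit Defensive.
Import GRing.Theory.
Local Open Scope ring_scope.

(* Rings: associative with identity; MathComp's unitRingType (nontrivial rings
   with a decidable unit predicate; "invertible" = two-sided unit). *)

Definition idempotent_el (R : unitRingType) (e : R) : Prop := e * e = e.

Definition nilpotent_el (R : unitRingType) (q : R) : Prop :=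
  exists n : nat, q ^+ n = 0.

Definition strongly_weakly_nil_clean (R : unitRingType) (a : R) : Prop :=
  exists e q : R, idempotent_el e /\ nilpotent_el q /\ e * q = q * e /\
    (a = q + e \/ a = q - e).

Definition GSWNC (R : unitRingType) : Prop :=
  forall a : R, ~ (a \is a GRing.unit) -> strongly_weakly_nil_clean a.

Definition left_ideal (R : unitRingType) (I : R -> Prop) : Prop :=
  I 0 /\ (forall x y, I x -> I y -> I (x + y)) /\ (forall r x, I x -> I (r * x)).

Definition maximal_left_ideal (R : unitRingType) (I : R -> Prop) : Prop :=
  left_ideal I /\ ~ I 1 /\
  forall K : R -> Prop, left_ideal K -> ~ K 1 -> (forall x, I x -> K x) ->
    forall x, K x -> I x.

Definition local_ring (R : unitRingType) : Prop :=
  exists I : R -> Prop, maximal_left_ideal I /\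
    forall K : R -> Prop, maximal_left_ideal K -> forall x, K x <-> I x.

Definition jacobson (R : unitRingType) (x : R) : Prop :=
  forall I : R -> Prop, maximal_left_ideal I -> I x.

Definition jacobson_nil (R : unitRingType) : Prop :=
  forall x : R, jacobson x -> nilpotent_el x.

(* With only trivial idempotents, a strongly weakly nil-clean element q + e or
   q - e is either nilpotent (e = 0) or a unit (e = 1, since q +- 1 is a unit).
   So R is GSWNC exactly when every non-unit is nilpotent.  If so, the non-units
   form a left ideal containing every proper one, hence R is local with nil
   radical.  Conversely, in a local ring with nil radical J, an element a
   outside J generates together with J the whole ring, so a has a left inverse
   b; then ab is an idempotent different from 0, hence ab = 1 and a is a unit. *)

From mathcomp Require Import all_boot all_algebra.
From Stdlib Require Import Classical.

Set Implicit Arguments.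
Unset Strict Implicit.
Unset Printing Implicit Defensive.
Import GRing.Theory.
Local Open Scope ring_scope.

Definition nonunit (R : unitRingType) (x : R) : Prop := ~ x \is a GRing.unit.

Section Nilpotents.

Variable R : unitRingType.
Implicit Types b q r x : R.

Lemma nilpotentN q : nilpotent_el q -> nilpotent_el (- q).
Proof. by case=> n qn; exists n; rewrite exprNn qn mulr0. Qed.

Lemma nilpotent_unit1B q : nilpotent_el q -> (1 - q) \is a GRing.unit.
Proof.
case=> n qn; set S := \sum_(i < n) q ^+ i.
have qS : (q - 1) * S = -1 by rewrite -subrX1 qn sub0r.
have comm_qS : GRing.comm (q - 1) S.
  apply: commr_sum => i _; apply: commrX.
  exact/commr_sym/commrB/commr1/commr_refl.
rewrite -opprB unitrN; apply/unitrP; exists (- S).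
by rewrite mulrN mulNr -comm_qS qS opprK.
Qed.

Lemma nilpotent_unit1D q : nilpotent_el q -> (1 + q) \is a GRing.unit.
Proof. by move/nilpotentN/nilpotent_unit1B; rewrite opprK. Qed.

Lemma nilpotent_linv_neq1 b q : nilpotent_el q -> b * q <> 1.
Proof.
case=> n qn bq; have bq_pow k : b ^+ k * q ^+ k = 1.
  elim: k => [|k IHk]; first by rewrite !expr0 mul1r.
  by rewrite exprSr exprS mulrA -(mulrA _ b) bq mulr1.
by move/eqP: (bq_pow n); rewrite qn mulr0 eq_sym oner_eq0.
Qed.

Lemma nilpotent_mull_nonunit r q : nilpotent_el q -> nonunit (r * q).
Proof.
move=> q_nil /unitrP [y [yrq _]].
by rewrite mulrA in yrq; apply: nilpotent_linv_neq1 q_nil yrq.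
Qed.

Lemma nilpotent_swnc q : nilpotent_el q -> strongly_weakly_nil_clean q.
Proof.
move=> q_nil; exists 0, q; split; first exact: mul0r.
by split=> //; rewrite mulr0 mul0r addr0; split=> //; left.
Qed.

Lemma proper_left_ideal_nonunit (K : R -> Prop) x :
  left_ideal K -> ~ K 1 -> K x -> nonunit x.
Proof.
by move=> [_ [_ K_mull]] K1 Kx x_unit; apply/K1; rewrite -(mulVr x_unit); auto.
Qed.

End Nilpotents.

Section NonunitsNil.

Variable R : unitRingType.
Hypothesis nonunit_nil : forall x : R, nonunit x -> nilpotent_el x.

Lemma nonunitD (x y : R) : nonunit x -> nonunit y -> nonunit (x + y).
Proof.
move=> x_nonunit y_nonunit /unitrP [v [vxy _]].
have vy_nil : nilpotent_el (v * y).
  exact/nonunit_nil/nilpotent_mull_nonunit/nonunit_nil.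
have vx_unit : v * x \is a GRing.unit.
  by rewrite (_ : v * x = 1 - v * y) ?nilpotent_unit1B // -vxy mulrDr addrK.
exact: nilpotent_mull_nonunit (nonunit_nil x_nonunit) vx_unit.
Qed.

Lemma left_ideal_nonunit : left_ideal (@nonunit R).
Proof.
split; first by rewrite /nonunit unitr0.
split; first exact: nonunitD.
by move=> r x /nonunit_nil; apply: nilpotent_mull_nonunit.
Qed.

Lemma maximal_left_ideal_nonunit : maximal_left_ideal (@nonunit R).
Proof.
split; first exact: left_ideal_nonunit.
split; first by rewrite /nonunit unitr1.
by move=> K K_ideal K1 _ x; apply: proper_left_ideal_nonunit K_ideal K1.
Qed.

Lemma local_nonunit_nil : local_ring R.
Proof.
exists (@nonunit R); split; first exact: maximal_left_ideal_nonunit.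
move=> K [K_ideal [K1 K_max]] x; split; first exact: proper_left_ideal_nonunit.
apply: K_max; first exact: left_ideal_nonunit.
  by rewrite /nonunit unitr1.
by move=> y; apply: proper_left_ideal_nonunit K_ideal K1.
Qed.

Lemma jacobson_nil_nonunit_nil : jacobson_nil R.
Proof. by move=> x /(_ _ maximal_left_ideal_nonunit); apply: nonunit_nil. Qed.

End NonunitsNil.

Section LeftIdealExtension.

Variable R : unitRingType.

Definition extend_left_ideal (I : R -> Prop) (a x : R) : Prop :=
  exists i r, I i /\ x = i + r * a.

Lemma left_ideal_extend (I : R -> Prop) a :
  left_ideal I -> left_ideal (extend_left_ideal I a).
Proof.
case=> I0 [I_add I_mull]; split; first by exists 0, 0; rewrite mul0r addr0.
split=> [x y [i [r [Ii ->]]] [j [s [Ij ->]]] | s x [i [r [Ii ->]]]].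
  by exists (i + j), (r + s); rewrite mulrDl addrACA; auto.
by exists (s * i), (s * r); rewrite mulrDr mulrA; auto.
Qed.

Lemma notin_maximal_left_invertible (I : R -> Prop) a :
  maximal_left_ideal I -> (forall i, I i -> (1 - i) \is a GRing.unit) ->
  ~ I a -> exists b, b * a = 1.
Proof.
move=> [I_ideal [I1 I_max]] I_unit1B a_notin_I; apply: NNPP => no_linv.
apply/a_notin_I/(I_max _ (left_ideal_extend a I_ideal)).
- move=> [i [r [Ii one_eq]]].
  have ra : r * a = 1 - i by rewrite one_eq addrC addKr.
  apply: no_linv; exists ((1 - i)^-1 * r).
  by rewrite -mulrA ra mulVr ?I_unit1B.
- by move=> x Ix; exists x, 0; rewrite mul0r addr0.
- by exists 0, 1; rewrite add0r mul1r; case: I_ideal.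
Qed.

End LeftIdealExtension.

Section TrivialIdempotents.

Variable R : unitRingType.
Hypothesis idempotent01 : forall e : R, idempotent_el e -> e = 0 \/ e = 1.

Lemma swnc_nonunit_nilpotent (a : R) :
  strongly_weakly_nil_clean a -> nonunit a -> nilpotent_el a.
Proof.
move=> [e [q [/idempotent01 [] -> [q_nil [_ a_eq]]]]] a_nonunit.
  by case: a_eq => ->; rewrite ?addr0 ?subr0.
exfalso; apply: a_nonunit; case: a_eq => ->.
  by rewrite addrC; apply: nilpotent_unit1D.
by rewrite -unitrN opprB; apply: nilpotent_unit1B.
Qed.

Lemma left_invertible_unit (a b : R) : b * a = 1 -> a \is a GRing.unit.
Proof.
move=> ba; have ab_idem : idempotent_el (a * b).
  by rewrite /idempotent_el mulrA -(mulrA a) ba mulr1.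
case: (idempotent01 ab_idem) => ab; last by apply/unitrP; exists b.
have b0 : b = 0 by rewrite -[b]mul1r -ba -mulrA ab mulr0.
by move/eqP: ba; rewrite b0 mul0r eq_sym oner_eq0.
Qed.

End TrivialIdempotents.

Theorem corollary2p50 (R : unitRingType) :
  (forall e : R, idempotent_el e -> e = 0 \/ e = 1) ->
  (GSWNC R <-> local_ring R /\ jacobson_nil R).
Proof.
move=> idempotent01; split=> [gswnc | [[I [I_max I_unique]] J_nil] a a_nonunit].
  have nonunit_nil (x : R) : nonunit x -> nilpotent_el x.
    by move=> x_nonunit; apply: swnc_nonunit_nilpotent (gswnc x x_nonunit) _.
  by split; [apply: local_nonunit_nil | apply: jacobson_nil_nonunit_nil].
have I_nil i : I i -> nilpotent_el i.
  by move=> Ii; apply: J_nil => K K_max; apply/(I_unique K K_max).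
have Ia : I a.
  apply: NNPP => a_notin_I.
  have [b ba] := notin_maximal_left_invertible I_max
    (fun i Ii => nilpotent_unit1B (I_nil i Ii)) a_notin_I.
  exact/a_nonunit/(left_invertible_unit idempotent01 ba).
exact/nilpotent_swnc/I_nil.
Qed.
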